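(* In Ruleset A, Ruleset B and Ruleset D, the Quantum variation of Nim on at most $k$ heaps is equivalent to the corresponding game in which only superpositions of at most $k$ classical moves are allowed (i.e. each Q-move is a set of at most $k$ classical moves, with the same ruleset's conditions otherwise).
   Context: Nim: $\mathrm{Nim}(x_1,\ldots,x_k)$ is the position with heaps of $x_1,\ldots,x_k$ tokens; the classical move $(i,-j)$ with $j\ge1$ removes $j$ tokens from heap $i$ and is illegal if heap $i$ has fewer than $j$ tokens; normal play. Quantum variation: a position is a nonempty finite set $\langle G_1,\ldots,G_n\rangle$ of classical positions. A classical move $m$ is legal if legal in some $G_i$. A Q-move is a nonempty set $\{m_1,\ldots,m_k\}$ of legal classical moves, leading to the superposition of all legal results $\Gamma(G_i,m_j)$. Ruleset A: only Q-moves with at least two classical moves allowed. Ruleset B: same, except when the player has exactly one legal classical move overall he may play it alone. Ruleset D: all Q-moves allowed. The player with no allowed Q-move loses. $G\equiv H$ means $G+X$ and $H+X$ have the same outcome for every game $X$ (disjunctive sum). *)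

From HB Require Import structures.
From mathcomp Require Import all_boot.
From mathcomp Require Import finmap.

Set Implicit Arguments.
Unset Strict Implicit.
Unset Printing Implicit Defensive.

Local Open Scope fset_scope.

(* Short games: finite trees with a list of Left options and a list of Right options. *)
Inductive pgame : Type := PGame of seq pgame & seq pgame.

(* Membership of an option in a list (Prop, no eqType needed). *)
Fixpoint inlist (x : pgame) (s : seq pgame) : Prop :=
  if s is y :: s' then y = x \/ inlist x s' else False.

Definition pgame_left (X : pgame) : seq pgame := let: PGame l _ := X in l.
Definition pgame_right (X : pgame) : seq pgame := let: PGame _ r := X in r.

Section Outcome.
Variables (T : Type) (mvL mvR : T -> T -> Prop).

(* lwin1 x : Left, moving first from x, has a winning strategy (normal play).
   rlose1 x : Right, moving first from x, loses (every Right move leads to a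
   position where Left, moving first, wins). *)
Inductive lwin1 : T -> Prop :=
  | LWin1 x y : mvL x y -> rlose1 y -> lwin1 x
with rlose1 : T -> Prop :=
  | RLose1 x : (forall y, mvR x y -> lwin1 y) -> rlose1 x.

Inductive rwin1 : T -> Prop :=
  | RWin1 x y : mvR x y -> llose1 y -> rwin1 x
with llose1 : T -> Prop :=
  | LLose1 x : (forall y, mvL x y -> rwin1 y) -> llose1 x.

End Outcome.

(* Disjunctive sum of an impartial game (positions T, move relation mv) with a
   short game X: the player to move moves in exactly one component. *)
Definition sumL (T : Type) (mv : T -> T -> Prop) (p q : T * pgame) : Prop :=
  (mv p.1 q.1 /\ q.2 = p.2) \/ (inlist q.2 (pgame_left p.2) /\ q.1 = p.1).
Definition sumR (T : Type) (mv : T -> T -> Prop) (p q : T * pgame) : Prop :=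
  (mv p.1 q.1 /\ q.2 = p.2) \/ (inlist q.2 (pgame_right p.2) /\ q.1 = p.1).

(* G == H : for every game X, G + X and H + X have the same outcome
   (outcome = who wins when Left starts, and who wins when Right starts). *)
Definition game_equiv (T1 T2 : Type) (mv1 : T1 -> T1 -> Prop) (G : T1)
    (mv2 : T2 -> T2 -> Prop) (H : T2) : Prop :=
  forall X : pgame,
    (lwin1 (sumL mv1) (sumR mv1) (G, X) <-> lwin1 (sumL mv2) (sumR mv2) (H, X)) /\
    (rwin1 (sumL mv1) (sumR mv1) (G, X) <-> rwin1 (sumL mv2) (sumR mv2) (H, X)).

Definition cpos (n : nat) := (n.-tuple nat)%type.
(* Classical move (i, -j): remove j tokens from heap i. *)
Definition cmove (n : nat) := ('I_n * nat)%type.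

Definition legal_in (n : nat) (m : cmove n) (g : cpos n) : bool :=
  (0 < m.2) && (m.2 <= tnth g m.1).

Definition apply_move (n : nat) (g : cpos n) (m : cmove n) : cpos n :=
  [tuple (if i == m.1 then tnth g i - m.2 else tnth g i) | i < n].

(* A quantum position is a (nonempty) finite set of classical positions. *)
Definition qpos (n : nat) := {fset cpos n}.

Definition legal_q (n : nat) (P : qpos n) (m : cmove n) : Prop :=
  exists2 g, g \in P & legal_in m g.

Definition qresult (n : nat) (P : qpos n) (M : {fset cmove n}) : qpos n :=
  [fset apply_move g m | g in P, m in M & legal_in m g].

Inductive ruleset := RulesetA | RulesetB | RulesetD.

Definition unique_legal (n : nat) (P : qpos n) : Prop :=
  exists m, legal_q P m /\ forall m', legal_q P m' -> m' = m.

Definition allowed (R : ruleset) (n : nat) (P : qpos n) (M : {fset cmove n}) : Prop :=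
  [/\ M != fset0,
      (forall m, m \in M -> legal_q P m) &
      match R with
      | RulesetA => 2 <= #|` M|
      | RulesetB => 2 <= #|` M| \/ (#|` M| = 1 /\ unique_legal P)
      | RulesetD => True
      end].

Definition qmove (R : ruleset) (n : nat) (P Q : qpos n) : Prop :=
  exists2 M, allowed R P M & Q = qresult P M.

Definition qmove_le (R : ruleset) (k : nat) (n : nat) (P Q : qpos n) : Prop :=
  exists2 M, allowed R P M /\ #|` M| <= k & Q = qresult P M.

From HB Require Import structures.
From mathcomp Require Import all_boot.
From mathcomp Require Import finmap.

(* Say P is dominated by Q when every component of P lies heapwise below
   some component of Q.  Legality of a classical move and the result of
   applying it are monotone heapwise, so mutual domination is preserved by
   playing the same Q-move on both sides and does not change which Q-moves are
   allowed: it is a bisimulation, and bisimilar games are equivalent in every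
   disjunctive sum.  Among the moves of a Q-move M acting on the same heap,
   only one removing the fewest tokens matters: applied to the same component,
   any other yields a heapwise smaller position.  Keeping these at most n
   minimal moves (padded with further moves of M up to two under Rulesets A
   and B) gives a Q-move of at most k classical moves whose result is mutually
   dominated with that of M. *)

Set Implicit Arguments.
Unset Strict Implicit.
Unset Printing Implicit Defensive.

Local Open Scope fset_scope.

Scheme lwin1_mind := Induction for lwin1 Sort Prop
  with rlose1_mind := Induction for rlose1 Sort Prop.
Scheme rwin1_mind := Induction for rwin1 Sort Prop
  with llose1_mind := Induction for llose1 Sort Prop.

Definition simulation (T1 T2 : Type) (S : T1 -> T2 -> Prop)
    (mv1 : T1 -> T1 -> Prop) (mv2 : T2 -> T2 -> Prop) :=
  forall x y x', S x y -> mv1 x x' -> exists2 y', mv2 y y' & S x' y'.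

Definition converse (T1 T2 : Type) (S : T1 -> T2 -> Prop) : T2 -> T1 -> Prop :=
  fun y x => S x y.

Definition bisimulation (T1 T2 : Type) (S : T1 -> T2 -> Prop)
    (mv1 : T1 -> T1 -> Prop) (mv2 : T2 -> T2 -> Prop) :=
  simulation S mv1 mv2 /\ simulation (converse S) mv2 mv1.

Section Bisimulation.
Variables (T1 T2 : Type) (S : T1 -> T2 -> Prop).

Lemma bisimulation_converse (a1 : T1 -> T1 -> Prop) (a2 : T2 -> T2 -> Prop) :
  bisimulation S a1 a2 -> bisimulation (converse S) a2 a1.
Proof. by case. Qed.

Lemma lwin1_bisim (a1 b1 : T1 -> T1 -> Prop) (a2 b2 : T2 -> T2 -> Prop) x y :
  bisimulation S a1 a2 -> bisimulation S b1 b2 ->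
  S x y -> lwin1 a1 b1 x -> lwin1 a2 b2 y.
Proof.
move=> [fwd _] [_ bwd] Sxy W; move: W y Sxy.
apply: (@lwin1_mind _ a1 b1 (fun z _ => forall y, S z y -> lwin1 a2 b2 y)
  (fun z _ => forall y, S z y -> rlose1 a2 b2 y)).
- move=> z z' mv _ IH y Sxy.
  have [y' mv' Szy'] := fwd _ _ _ Sxy mv.
  exact: LWin1 mv' (IH _ Szy').
- move=> z _ IH y Sxy; constructor=> y' mv'.
  have [z' mv Sz'y'] := bwd _ _ _ Sxy mv'.
  exact: IH mv _ Sz'y'.
Qed.

Lemma rwin1_bisim (a1 b1 : T1 -> T1 -> Prop) (a2 b2 : T2 -> T2 -> Prop) x y :
  bisimulation S a1 a2 -> bisimulation S b1 b2 ->
  S x y -> rwin1 a1 b1 x -> rwin1 a2 b2 y.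
Proof.
move=> [_ bwd] [fwd _] Sxy W; move: W y Sxy.
apply: (@rwin1_mind _ a1 b1 (fun z _ => forall y, S z y -> rwin1 a2 b2 y)
  (fun z _ => forall y, S z y -> llose1 a2 b2 y)).
- move=> z z' mv _ IH y Sxy.
  have [y' mv' Szy'] := fwd _ _ _ Sxy mv.
  exact: RWin1 mv' (IH _ Szy').
- move=> z _ IH y Sxy; constructor=> y' mv'.
  have [z' mv Sz'y'] := bwd _ _ _ Sxy mv'.
  exact: IH mv _ Sz'y'.
Qed.

End Bisimulation.

(* [sumL mv] and [sumR mv] are, by definition, [sum_move pgame_left mv] and
   [sum_move pgame_right mv]. *)
Definition sum_move (T : Type) (opts : pgame -> seq pgame)
    (mv : T -> T -> Prop) (p q : T * pgame) : Prop :=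
  (mv p.1 q.1 /\ q.2 = p.2) \/ (inlist q.2 (opts p.2) /\ q.1 = p.1).

Definition sum_rel (T1 T2 : Type) (S : T1 -> T2 -> Prop)
    (p : T1 * pgame) (q : T2 * pgame) : Prop :=
  S p.1 q.1 /\ p.2 = q.2.

Lemma simulation_sum (T1 T2 : Type) (S : T1 -> T2 -> Prop)
    (opts : pgame -> seq pgame) (a1 : T1 -> T1 -> Prop)
    (a2 : T2 -> T2 -> Prop) :
  simulation S a1 a2 ->
  simulation (sum_rel S) (sum_move opts a1) (sum_move opts a2).
Proof.
move=> sim [x X] [y Y] [x' X'] [/= Sxy <-] [[/= mv ->] | [/= opt ->]].
- by have [y' mv' Sxy'] := sim _ _ _ Sxy mv; exists (y', X); [left | ].
- by exists (y, X'); [right | ].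
Qed.

Lemma bisimulation_sum (T1 T2 : Type) (S : T1 -> T2 -> Prop)
    (opts : pgame -> seq pgame) (a1 : T1 -> T1 -> Prop)
    (a2 : T2 -> T2 -> Prop) :
  bisimulation S a1 a2 ->
  bisimulation (sum_rel S) (sum_move opts a1) (sum_move opts a2).
Proof.
move=> [fwd bwd]; split; first exact: simulation_sum.
move=> q p q' [Spq eqX] /(simulation_sum bwd (conj Spq (esym eqX))).
by case=> p' mv [Sqp' eqX']; exists p'.
Qed.

Lemma bisimulation_game_equiv (T1 T2 : Type) (S : T1 -> T2 -> Prop)
    (mv1 : T1 -> T1 -> Prop) (mv2 : T2 -> T2 -> Prop) G H :
  bisimulation S mv1 mv2 -> S G H -> game_equiv mv1 G mv2 H.
Proof.
move=> bis SGH X.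
have bisL : bisimulation (sum_rel S) (sumL mv1) (sumL mv2).
  exact (bisimulation_sum pgame_left bis).
have bisR : bisimulation (sum_rel S) (sumR mv1) (sumR mv2).
  exact (bisimulation_sum pgame_right bis).
have rel : sum_rel S (G, X) (H, X) by [].
have [bisL' bisR'] := (bisimulation_converse bisL, bisimulation_converse bisR).
split; split.
- exact: lwin1_bisim bisL bisR rel.
- exact: lwin1_bisim bisL' bisR' rel.
- exact: rwin1_bisim bisL bisR rel.
- exact: rwin1_bisim bisL' bisR' rel.
Qed.

Lemma fsubset_card_between (K : choiceType) (A B : {fset K}) j :
  A `<=` B -> #|` A| <= j <= #|` B| ->
  exists2 C, A `<=` C /\ C `<=` B & #|` C| = j.
Proof.
move=> AB; elim: j => [|j IH] /andP [Aj jB].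
  by exists A; [split | apply/eqP; rewrite -leqn0].
have [Aj1 | Alej] := eqVneq #|` A| j.+1; first by exists A.
have [C [AC CB] Cj] : exists2 C, A `<=` C /\ C `<=` B & #|` C| = j.
  by apply: IH; rewrite -ltnS ltn_neqAle Alej Aj ltnW.
have /fsubsetPn [x xB xC] : ~~ (B `<=` C).
  by apply: contraTN jB => /fsubset_leq_card; rewrite Cj -ltnNge.
exists (x |` C); last by rewrite cardfsU1 xC Cj.
split; first exact: fsubset_trans AC (fsubsetU1 _ _).
by apply/fsubsetP => y /fset1UP [-> | /(fsubsetP CB)].
Qed.

Section Domination.
Variable n : nat.
Implicit Types (g h : cpos n) (P Q : qpos n) (m : cmove n) (M : {fset cmove n}).

Definition cpos_le g h := forall i, tnth g i <= tnth h i.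

Definition qdom P Q := forall g, g \in P -> exists2 h, h \in Q & cpos_le g h.

Definition qsim P Q := qdom P Q /\ qdom Q P.

Lemma qdom_refl P : qdom P P.
Proof. by move=> g gP; exists g. Qed.

Lemma qdom_trans P Q S : qdom P Q -> qdom Q S -> qdom P S.
Proof.
move=> PQ QS g /PQ [h /QS [l lS hl] gh].
by exists l => // i; apply: leq_trans (gh i) (hl i).
Qed.

Lemma qsim_refl P : qsim P P.
Proof. by split; apply: qdom_refl. Qed.

Lemma qsim_sym P Q : qsim P Q -> qsim Q P.
Proof. by case. Qed.

Lemma qsim_trans P Q S : qsim P Q -> qsim Q S -> qsim P S.
Proof.
move=> [PQ QP] [QS SQ].
by split; [apply: qdom_trans PQ QS | apply: qdom_trans SQ QP].
Qed.

Lemma legal_in_le m g h : cpos_le g h -> legal_in m g -> legal_in m h.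
Proof.
by rewrite /legal_in => gh /andP [-> le]; rewrite (leq_trans le (gh _)).
Qed.

Lemma tnth_apply_move g m i :
  tnth (apply_move g m) i = if i == m.1 then tnth g i - m.2 else tnth g i.
Proof. exact: tnth_mktuple. Qed.

Lemma apply_move_le m g h :
  cpos_le g h -> cpos_le (apply_move g m) (apply_move h m).
Proof.
by move=> gh i; rewrite !tnth_apply_move; case: ifP => _; rewrite ?leq_sub2r.
Qed.

Lemma legal_q_qdom P Q m : qdom P Q -> legal_q P m -> legal_q Q m.
Proof.
by move=> PQ [g /PQ [h hQ gh] lg]; exists h => //; apply: legal_in_le lg.
Qed.

Lemma allowed_qsim R P Q M : qsim P Q -> allowed R P M -> allowed R Q M.
Proof.
move=> [PQ QP] [M0 legalM cardM]; split => // [m /legalM | ].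
  exact: legal_q_qdom.
case: R cardM => //= -[| [M1 [m [legal_m uniq_m]]]]; first by left.
right; split => //.
exists m; split; first exact: legal_q_qdom legal_m.
by move=> m' /(legal_q_qdom QP); apply: uniq_m.
Qed.

Lemma qresultP P M x :
  reflect (exists g m, [/\ g \in P, m \in M, legal_in m g & x = apply_move g m])
    (x \in qresult P M).
Proof.
apply: (iffP idP) => [/imfset2P [g /= gP [m /=]] | [g [m [gP mM lg ->]]]].
  by rewrite inE => /andP [mM lg] ->; exists g, m.
by apply/imfset2P; exists g => //; exists m; rewrite //= inE mM lg.
Qed.

Lemma qresult_qdom P Q M : qdom P Q -> qdom (qresult P M) (qresult Q M).
Proof.
move=> PQ _ /qresultP [g [m [/PQ [h hQ gh] mM lg ->]]].
exists (apply_move h m); last exact: apply_move_le.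
by apply/qresultP; exists h, m; split => //; apply: legal_in_le lg.
Qed.

Lemma qresult_qsim P Q M : qsim P Q -> qsim (qresult P M) (qresult Q M).
Proof. by move=> [PQ QP]; split; apply: qresult_qdom. Qed.

Definition min_moves M : {fset cmove n} :=
  [fset m in M | all (fun m' : cmove n => (m'.1 == m.1) ==> (m.2 <= m'.2)) M].

Lemma min_moves_sub M : min_moves M `<=` M.
Proof. by apply/fsubsetP => m; rewrite inE => /andP []. Qed.

Lemma min_moves_exists M m : m \in M ->
  exists2 m0, m0 \in min_moves M & m0.1 = m.1 /\ m0.2 <= m.2.
Proof.
move=> mM; have heap_m : exists j, (m.1, j) \in M.
  by exists m.2; rewrite -surjective_pairing.
case: (ex_minnP heap_m) => j jM jmin.
exists (m.1, j); last by split => //; apply: jmin; rewrite -surjective_pairing.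
rewrite inE /=; apply/andP; split => //.
apply/allP => -[i l] lM /=; apply/implyP => /eqP eq_i.
by apply: jmin; rewrite -eq_i.
Qed.

Lemma card_min_moves M : #|` min_moves M| <= n.
Proof.
have heap_inj : {in min_moves M &, injective (fun m : cmove n => m.1)}.
  move=> [i a] [i' b]; rewrite !inE.
  move=> /andP [aM /allP amin] /andP [bM /allP bmin] /= eq_i.
  move: (amin _ bM) (bmin _ aM); rewrite /= eq_i eqxx /= => ab ba.
  by apply/eqP; rewrite xpair_eqE eqxx eqn_leq ab ba.
rewrite -(eqP (introT (card_in_imfsetP _ _) heap_inj)).
have heaps : (fun m : cmove n => m.1) @` min_moves M `<=` [fset i in 'I_n].
  by apply/fsubsetP => i _; rewrite inE.
by apply: leq_trans (fsubset_leq_card heaps) _; rewrite card_finset card_ord.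
Qed.

(* Removing fewer tokens from a heap leaves a heapwise larger position. *)
Lemma qsim_qresult_between P M M' :
  (forall m, m \in M -> legal_q P m) -> min_moves M `<=` M' -> M' `<=` M ->
  qsim (qresult P M) (qresult P M').
Proof.
move=> legalM minM' M'M; split; last first.
  move=> _ /qresultP [g [m [gP mM lg ->]]]; exists (apply_move g m) => [|i //].
  by apply/qresultP; exists g, m; split => //; apply: (fsubsetP M'M).
move=> _ /qresultP [g [m [gP mM lg ->]]].
have [m0 m0min [heap0 le0]] := min_moves_exists mM.
have [_ _ /andP [pos0 _]] := legalM _ (fsubsetP (min_moves_sub M) _ m0min).
have lg0 : legal_in m0 g.
  by case/andP: lg => _ le; rewrite /legal_in pos0 heap0 (leq_trans le0 le).
exists (apply_move g m0).
  by apply/qresultP; exists g, m0; split => //; apply: (fsubsetP minM').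
by move=> i; rewrite !tnth_apply_move heap0; case: ifP => _; rewrite ?leq_sub2l.
Qed.

Lemma allowed_fsubset R P M M' :
  allowed R P M -> M' `<=` M -> M' != fset0 ->
  (R = RulesetD \/ 2 <= #|` M'|) -> allowed R P M'.
Proof.
move=> [_ legalM _] M'M M'0 cardM'; split => // [m /(fsubsetP M'M) /legalM //|].
by case: cardM' => [-> | two] //; case: R => //; left.
Qed.

Lemma exists_small_qmove R k P M :
  (R = RulesetD \/ 2 <= k) -> n <= k -> allowed R P M ->
  exists2 M', allowed R P M' /\ #|` M'| <= k &
    qsim (qresult P M) (qresult P M').
Proof.
move=> hR nk allowedM; have [M0 legalM _] := allowedM.
have [small | big] := leqP #|` M| k; first by exists M => //; apply: qsim_refl.
have min_k : #|` min_moves M| <= k := leq_trans (card_min_moves M) nk.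
case: hR => [RD | two_k].
  exists (min_moves M).
    split => //.
    apply: allowed_fsubset allowedM (min_moves_sub M) _ (or_introl RD).
    have [M_0 | [m mM]] := fset_0Vmem M; first by rewrite M_0 eqxx in M0.
    by have [m0 m0min _] := min_moves_exists mM; apply/fset0Pn; exists m0.
  exact: qsim_qresult_between legalM (fsubset_refl _) (min_moves_sub M).
have /(fsubset_card_between (min_moves_sub M)) [M' [minM' M'M] cardM'] :
    #|` min_moves M| <= maxn 2 #|` min_moves M| <= #|` M|.
  by rewrite leq_maxr (leq_trans _ (ltnW big)) // geq_max two_k min_k.
exists M'; last exact: qsim_qresult_between.
split; last by rewrite cardM' geq_max two_k min_k.
apply: allowed_fsubset allowedM M'M _ _.
  by rewrite -cardfs_gt0 cardM' leq_max.
by right; rewrite cardM' leq_maxl.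
Qed.

Lemma qsim_bisimulation R k : (R = RulesetD \/ 2 <= k) -> n <= k ->
  bisimulation qsim (@qmove R n) (@qmove_le R k n).
Proof.
move=> hR nk; split.
  move=> P Q _ PQ [M allowedM ->].
  have /(exists_small_qmove hR nk) [M' small simM'] :=
    allowed_qsim PQ allowedM.
  exists (qresult Q M'); first by exists M'.
  exact: qsim_trans (qresult_qsim M PQ) simM'.
move=> Q P _ PQ [M [allowedM _] ->].
exists (qresult P M); last exact: qresult_qsim.
by exists M => //; apply: allowed_qsim (qsim_sym PQ) allowedM.
Qed.

End Domination.

Theorem corollary2 (R : ruleset) (k n : nat) (P : qpos n) :
  (R = RulesetD \/ 2 <= k) -> n <= k -> P != fset0 ->
  game_equiv (@qmove R n) P (@qmove_le R k n) P.
Proof.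
move=> hR nk _.
exact: bisimulation_game_equiv (qsim_bisimulation hR nk) (qsim_refl P).
Qed.
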